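(* Let $\mathcal{P}\subseteq\mathbb{Z}_{\geq0}$ with $0\in\mathcal{P}$ and $\mathcal{P}-2\neq\emptyset$. Then for all $k\ge0$, $\tau_k^\mathcal{P}<\tau_{k+1}^\mathcal{P}<\tau_\mathcal{P}$, and the sequence $(\tau_k^\mathcal{P})_{k\ge0}$ converges to $\tau_\mathcal{P}$.
   Context: $e_\mathcal{P}(z)=\sum_{n\in\mathcal{P}}z^n/n!$; $\mathcal{P}-2=\{n-2:n\in\mathcal{P},n\ge2\}$. $\tau_\mathcal{P}$ is the unique $\tau\in\mathbb{R}_{>0}$ with $e_\mathcal{P}(\tau)-\tau e_\mathcal{P}'(\tau)=0$, and $\rho_\mathcal{P}=\tau_\mathcal{P}/e_\mathcal{P}(\tau_\mathcal{P})$. Define power series $T^\mathcal{P}_{\le h}(z)$ by $T^\mathcal{P}_{\le -1}(z)=0$ and $T^\mathcal{P}_{\le h}(z)=z\,e_\mathcal{P}(T^\mathcal{P}_{\le h-1}(z))$ for $h\ge0$ (these are entire functions; $T^\mathcal{P}_{\le h}$ is the exponential generating function of labeled rooted trees of height at most $h$ in which every vertex has a number of children in $\mathcal{P}$). Then $\tau_k^\mathcal{P}=T^\mathcal{P}_{\le k-1}(\rho_\mathcal{P})$; equivalently $\tau_0^\mathcal{P}=0$ and $\tau_{k+1}^\mathcal{P}=\rho_\mathcal{P}e_\mathcal{P}(\tau_k^\mathcal{P})$. *)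

From Stdlib Require Import Reals Factorial.
From Coquelicot Require Import Coquelicot.
Open Scope R_scope.

Definition eP (P : nat -> bool) (x : R) : R :=
  Series (fun n => if P n then x ^ n / INR (fact n) else 0).

(* T_le P h z  =  T^P_{<= h-1}(z):  T_le P 0 z = 0 (= T_{<=-1}),
   T_le P (h+1) z = z * e_P (T_le P h z). *)
Fixpoint T_le (P : nat -> bool) (h : nat) (z : R) : R :=
  match h with
  | O => 0
  | S h' => z * eP P (T_le P h' z)
  end.

Definition rhoP (P : nat -> bool) (tau : R) : R := tau / eP P tau.

Definition tauk (P : nat -> bool) (tau : R) (k : nat) : R :=
  T_le P k (rhoP P tau).

(* With E := e_P and rho := tau / E(tau), the numbers tau_k are the iterates
   of f(x) = rho E(x) starting from 0.  E is an entire power series with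
   nonnegative coefficients, one of which, of degree >= 2, is positive; so on
   [0, oo) it is strictly increasing and lies strictly above each of its
   tangents.  The equation defining tau says that the tangent of E at tau
   passes through the origin, whence x < f(x) < f(tau) = tau for 0 <= x < tau.
   Thus (tau_k) increases strictly and stays below tau, and its limit is a
   fixed point of f in [0, tau], which can only be tau. *)

From Stdlib Require Import Reals Lra Lia Factorial FunctionalExtensionality.
From Coquelicot Require Import Coquelicot.
Open Scope R_scope.

Lemma Series_ge0 (u : nat -> R) :
  ex_series u -> (forall n, 0 <= u n) -> 0 <= Series u.
Proof.
  intros Hu Hpos.
  rewrite <- (Rmult_0_l (Series u)), <- Series_scal_l.
  apply Series_le; [|exact Hu].
  intro n; rewrite Rmult_0_l; split; [lra | apply Hpos].
Qed.

Lemma Series_gt0 (u : nat -> R) (m : nat) :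
  ex_series u -> (forall n, 0 <= u n) -> 0 < u m -> 0 < Series u.
Proof.
  intros Hu Hpos Hm.
  rewrite (Series_incr_n u (S m)) by (lia || exact Hu); simpl pred.
  assert (Htail : 0 <= Series (fun k => u (S m + k)%nat)).
  { apply Series_ge0; [now apply ex_series_incr_n | intro; apply Hpos]. }
  assert (Hhead : u m <= sum_f_R0 u m).
  { destruct m as [|m]; simpl; [lra|].
    assert (0 <= sum_f_R0 u m) by (apply cond_pos_sum; exact Hpos); lra. }
  lra.
Qed.

Lemma pow_tangent_gap_succ (x t : R) (m : nat) :
  x ^ S (S m) - t ^ S (S m) - INR (S (S m)) * t ^ S m * (x - t)
  = x * (x ^ S m - t ^ S m - INR (S m) * t ^ m * (x - t))
    + INR (S m) * t ^ m * (x - t) ^ 2.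
Proof. rewrite (S_INR (S m)); simpl; ring. Qed.

Lemma pow_tangent_le (x t : R) (m : nat) : 0 <= x -> 0 <= t ->
  t ^ S m + INR (S m) * t ^ m * (x - t) <= x ^ S m.
Proof.
  intros Hx Ht.
  enough (0 <= x ^ S m - t ^ S m - INR (S m) * t ^ m * (x - t)) by lra.
  induction m as [|m IH].
  - simpl; lra.
  - rewrite pow_tangent_gap_succ.
    apply Rplus_le_le_0_compat; [now apply Rmult_le_pos|].
    apply Rmult_le_pos; [apply Rmult_le_pos; [apply pos_INR | now apply pow_le]|].
    apply pow2_ge_0.
Qed.

Lemma pow_tangent_lt (x t : R) (m : nat) : 0 <= x -> 0 < t -> x <> t ->
  t ^ S (S m) + INR (S (S m)) * t ^ S m * (x - t) < x ^ S (S m).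
Proof.
  intros Hx Ht Hxt.
  enough (0 < x ^ S (S m) - t ^ S (S m) - INR (S (S m)) * t ^ S m * (x - t)) by lra.
  rewrite pow_tangent_gap_succ.
  apply Rplus_le_lt_0_compat.
  - apply Rmult_le_pos; [exact Hx|].
    pose proof (pow_tangent_le x t m Hx (Rlt_le _ _ Ht)); lra.
  - apply Rmult_lt_0_compat; [apply Rmult_lt_0_compat|].
    + apply lt_0_INR; lia.
    + now apply pow_lt.
    + apply pow2_gt_0; lra.
Qed.

Lemma CV_radius_le_abs (a b : nat -> R) :
  (forall n, Rabs (a n) <= Rabs (b n)) -> Rbar_le (CV_radius b) (CV_radius a).
Proof.
  intros Hab.
  destruct (CV_radius_bounded a) as [Ha_ub _].
  destruct (CV_radius_bounded b) as [_ Hb_lub].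
  apply Hb_lub; intros r [M HM]; apply Ha_ub.
  exists M; intro n; eapply Rle_trans; [|apply (HM n)].
  rewrite !Rabs_mult; apply Rmult_le_compat_r; [apply Rabs_pos | apply Hab].
Qed.

Lemma CV_radius_inv_fact : CV_radius (fun n => / INR (fact n)) = p_infty.
Proof.
  apply CV_radius_infinite_DAlembert.
  - intro n; apply Rinv_neq_0_compat, INR_fact_neq_0.
  - apply is_lim_seq_ext with (fun n => / INR (S n)).
    + intro n.
      assert (0 < INR (fact n)) by apply INR_fact_lt_0.
      assert (0 < INR (S n)) by (apply lt_0_INR; lia).
      rewrite fact_simpl, mult_INR, Rabs_pos_eq.
      * field; lra.
      * apply Rlt_le, Rdiv_lt_0_compat; apply Rinv_0_lt_compat;
          [apply Rmult_lt_0_compat|]; assumption.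
    + replace (Finite 0) with (Rbar_inv p_infty) by reflexivity.
      apply is_lim_seq_inv; [|discriminate].
      apply (is_lim_seq_incr_1 INR p_infty), is_lim_seq_INR.
Qed.

Lemma ex_series_entire (a : nat -> R) (x : R) :
  CV_radius a = p_infty -> ex_series (fun n => a n * x ^ n).
Proof.
  intros Ha; apply ex_series_Rabs, CV_disk_inside; now rewrite Ha.
Qed.

Lemma ex_series_Rminus (u v : nat -> R) :
  ex_series u -> ex_series v -> ex_series (fun n => u n - v n).
Proof. exact (ex_series_minus u v). Qed.

Section NonnegEntireSeries.

Variable a : nat -> R.
Hypothesis a_ge0 : forall n, 0 <= a n.
Hypothesis a_entire : CV_radius a = p_infty.

Let ex_a (x : R) : ex_series (fun n => a n * x ^ n) := ex_series_entire a x a_entire.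

Lemma PSeries_lt_compat (m : nat) (x y : R) :
  (1 <= m)%nat -> 0 < a m -> 0 <= x < y -> PSeries a x < PSeries a y.
Proof.
  intros Hm Ham Hxy.
  enough (0 < PSeries a y - PSeries a x) by lra.
  unfold PSeries; rewrite <- Series_minus by apply ex_a.
  apply Series_gt0 with m.
  - apply ex_series_Rminus; apply ex_a.
  - intro n; assert (x ^ n <= y ^ n) by (apply pow_incr; lra).
    pose proof (a_ge0 n); nra.
  - destruct m as [|m]; [lia|].
    assert (x ^ m <= y ^ m) by (apply pow_incr; lra).
    assert (0 < y ^ m) by (apply pow_lt; lra).
    assert (x ^ S m < y ^ S m) by (simpl; nra).
    nra.
Qed.

Lemma PSeries_gt_tangent (m : nat) (x t : R) :
  (2 <= m)%nat -> 0 < a m -> 0 <= x -> 0 < t -> x <> t ->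
  PSeries a t + Derive (PSeries a) t * (x - t) < PSeries a x.
Proof.
  intros Hm Ham Hx Ht Hxt.
  rewrite Derive_PSeries by now rewrite a_entire.
  set (gap k := a (S k) * x ^ S k - a (S k) * t ^ S k
                - PS_derive a k * t ^ k * (x - t)).
  assert (Hgap : forall k, gap k
    = a (S k) * (x ^ S k - (t ^ S k + INR (S k) * t ^ k * (x - t)))).
  { intro k; unfold gap, PS_derive; ring. }
  assert (ex_shift : forall y, ex_series (fun k => a (S k) * y ^ S k)).
  { intro y; apply (ex_series_incr_1 (fun n => a n * y ^ n)), ex_a. }
  assert (ex_der : ex_series (fun k => PS_derive a k * t ^ k * (x - t))).
  { apply ex_series_scal_r, ex_series_entire; now rewrite CV_radius_derive. }
  assert (Hsplit : PSeries a x - PSeries a t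
                   - PSeries (PS_derive a) t * (x - t) = Series gap).
  { unfold PSeries, gap.
    rewrite (Series_incr_1 (fun n => a n * x ^ n)), (Series_incr_1 (fun n => a n * t ^ n))
      by apply ex_a.
    rewrite !Series_minus, Series_scal_r; try apply ex_series_Rminus; auto.
    simpl; ring. }
  enough (0 < Series gap) by lra.
  destruct m as [|[|m]]; [lia | lia |].
  apply Series_gt0 with (S m).
  - apply ex_series_Rminus; [apply ex_series_Rminus|]; auto.
  - intro k; rewrite Hgap.
    apply Rmult_le_pos; [apply a_ge0|].
    pose proof (pow_tangent_le x t k Hx (Rlt_le _ _ Ht)); lra.
  - rewrite Hgap; apply Rmult_lt_0_compat; [exact Ham|].
    pose proof (pow_tangent_lt x t m Hx Ht Hxt); lra.
Qed.

End NonnegEntireSeries.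

Section IncreasingIteration.

Variables (f : R -> R) (u : nat -> R) (a b : R).
Hypothesis a_lt_b : a < b.
Hypothesis f_gt_id : forall x, a <= x < b -> x < f x.
Hypothesis f_lt_b : forall x, a <= x < b -> f x < b.
Hypothesis f_cont : forall x, a <= x <= b -> continuity_pt f x.
Hypothesis u_0 : u 0%nat = a.
Hypothesis u_S : forall k, u (S k) = f (u k).

Lemma iter_bounds (k : nat) : a <= u k < b.
Proof.
  induction k as [|k IH]; [rewrite u_0; lra|].
  rewrite u_S; pose proof (f_gt_id _ IH); pose proof (f_lt_b _ IH); lra.
Qed.

Lemma iter_increasing (k : nat) : u k < u (S k).
Proof. rewrite u_S; apply f_gt_id, iter_bounds. Qed.

Lemma iter_cvg : is_lim_seq u b.
Proof.
  destruct (ex_finite_lim_seq_incr u b) as [l Hl].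
  { intro k; left; apply iter_increasing. }
  { intro k; left; apply iter_bounds. }
  assert (Hl_le_b : l <= b).
  { apply (is_lim_seq_le u (fun _ => b) l b); [|exact Hl|apply is_lim_seq_const].
    intro k; left; apply iter_bounds. }
  assert (Ha_le_l : a <= l).
  { apply (is_lim_seq_le (fun _ => a) u a l); [|apply is_lim_seq_const|exact Hl].
    intro k; apply iter_bounds. }
  assert (Hfix : f l = l).
  { assert (Hf : is_lim_seq (fun k => u (S k)) (f l)).
    { apply is_lim_seq_ext with (fun k => f (u k)); [intro; symmetry; apply u_S|].
      apply is_lim_seq_continuous; [apply f_cont; lra | exact Hl]. }
    apply (is_lim_seq_incr_1 u) in Hl.
    apply is_lim_seq_unique in Hl, Hf.
    rewrite Hl in Hf; now injection Hf. }
  destruct Hl_le_b as [Hlt|Heq]; [|now subst].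
  pose proof (f_gt_id l (conj Ha_le_l Hlt)); lra.
Qed.

End IncreasingIteration.

Definition eP_coef (P : nat -> bool) (n : nat) : R :=
  if P n then / INR (fact n) else 0.

Lemma eP_eq_PSeries (P : nat -> bool) : eP P = PSeries (eP_coef P).
Proof.
  apply functional_extensionality; intro x.
  unfold eP, PSeries, eP_coef; apply Series_ext; intro n.
  destruct (P n); unfold Rdiv; ring.
Qed.

Lemma eP_coef_ge0 (P : nat -> bool) (n : nat) : 0 <= eP_coef P n.
Proof.
  unfold eP_coef; destruct (P n); [|lra].
  apply Rlt_le, Rinv_0_lt_compat, INR_fact_lt_0.
Qed.

Lemma eP_coef_gt0 (P : nat -> bool) (n : nat) : P n = true -> 0 < eP_coef P n.
Proof. intros HPn; unfold eP_coef; rewrite HPn; apply Rinv_0_lt_compat, INR_fact_lt_0. Qed.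

Lemma CV_radius_eP_coef (P : nat -> bool) : CV_radius (eP_coef P) = p_infty.
Proof.
  apply Rbar_le_antisym; [destruct (CV_radius (eP_coef P)); simpl; trivial|].
  rewrite <- CV_radius_inv_fact; apply CV_radius_le_abs; intro n.
  unfold eP_coef; destruct (P n); [lra|].
  rewrite Rabs_R0; apply Rabs_pos.
Qed.

Lemma eP_0 (P : nat -> bool) : P 0%nat = true -> eP P 0 = 1.
Proof.
  intros HP0; rewrite eP_eq_PSeries, PSeries_0; unfold eP_coef; rewrite HP0.
  simpl; lra.
Qed.

Lemma eP_continuous (P : nat -> bool) (c x : R) :
  continuity_pt (fun y => c * eP P y) x.
Proof.
  rewrite eP_eq_PSeries; apply (continuity_pt_scal (PSeries (eP_coef P))).
  apply PSeries_continuity; now rewrite CV_radius_eP_coef.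
Qed.

Lemma eP_lt_compat (P : nat -> bool) (m : nat) (x y : R) :
  (1 <= m)%nat -> P m = true -> 0 <= x < y -> eP P x < eP P y.
Proof.
  intros Hm HPm; rewrite eP_eq_PSeries.
  apply (PSeries_lt_compat _ (eP_coef_ge0 P) (CV_radius_eP_coef P) m); auto.
  now apply eP_coef_gt0.
Qed.

Lemma eP_gt_tangent (P : nat -> bool) (m : nat) (x t : R) :
  (2 <= m)%nat -> P m = true -> 0 <= x -> 0 < t -> x <> t ->
  eP P t + Derive (eP P) t * (x - t) < eP P x.
Proof.
  intros Hm HPm; rewrite eP_eq_PSeries.
  apply (PSeries_gt_tangent _ (eP_coef_ge0 P) (CV_radius_eP_coef P) m); auto.
  now apply eP_coef_gt0.
Qed.

Section TangentFixedPoint.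

Variables (P : nat -> bool) (m : nat) (tau : R).
Hypothesis hP0 : P 0%nat = true.
Hypothesis hm : (2 <= m)%nat.
Hypothesis hPm : P m = true.
Hypothesis htau_pos : 0 < tau.
Hypothesis htau : eP P tau - tau * Derive (eP P) tau = 0.

Lemma eP_tau_gt1 : 1 < eP P tau.
Proof. rewrite <- (eP_0 P hP0); apply (eP_lt_compat P m); [lia | exact hPm | lra]. Qed.

Lemma rhoP_eP_lt (x : R) : 0 <= x < tau -> rhoP P tau * eP P x < tau.
Proof.
  intros Hx; pose proof eP_tau_gt1.
  assert (eP P x < eP P tau) by (apply (eP_lt_compat P m); [lia | exact hPm | lra]).
  unfold rhoP; apply Rmult_lt_reg_r with (eP P tau); [lra|].
  replace (tau / eP P tau * eP P x * eP P tau) with (tau * eP P x) by (field; lra).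
  nra.
Qed.

Lemma rhoP_eP_gt_id (x : R) : 0 <= x < tau -> x < rhoP P tau * eP P x.
Proof.
  intros Hx; pose proof eP_tau_gt1.
  (* By [htau] the tangent of [eP P] at [tau] is the line through the origin
     [y |-> eP P tau * y / tau]; strict convexity puts [eP P x] above it. *)
  assert (Hline : eP P tau * x < tau * eP P x).
  { pose proof (eP_gt_tangent P m x tau hm hPm (proj1 Hx) htau_pos ltac:(lra)).
    replace (eP P tau * x)
      with (tau * (eP P tau + Derive (eP P) tau * (x - tau))) by nra.
    now apply Rmult_lt_compat_l. }
  unfold rhoP; apply Rmult_lt_reg_r with (eP P tau); [lra|].
  replace (tau / eP P tau * eP P x * eP P tau) with (tau * eP P x) by (field; lra).
  lra.
Qed.

End TangentFixedPoint.

Theorem lemma7p3 (P : nat -> bool)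
  (hP0 : P 0%nat = true)
  (hP2 : exists n : nat, (2 <= n)%nat /\ P n = true)
  (tau : R)
  (htau_pos : 0 < tau)
  (htau : eP P tau - tau * Derive (eP P) tau = 0) :
  (forall k : nat, tauk P tau k < tauk P tau (S k) /\ tauk P tau (S k) < tau) /\
  is_lim_seq (fun k => tauk P tau k) tau.
Proof.
  destruct hP2 as [m [hm hPm]].
  set (f x := rhoP P tau * eP P x).
  assert (f_gt_id : forall x, 0 <= x < tau -> x < f x)
    by (intros; now apply (rhoP_eP_gt_id P m)).
  assert (f_lt_tau : forall x, 0 <= x < tau -> f x < tau)
    by (intros; now apply (rhoP_eP_lt P m)).
  assert (f_cont : forall x, 0 <= x <= tau -> continuity_pt f x)
    by (intros; apply eP_continuous).
  assert (tauk_S : forall k, tauk P tau (S k) = f (tauk P tau k)) by reflexivity.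
  split; [intro k; split|].
  - now apply (iter_increasing f _ 0 tau).
  - now apply (iter_bounds f _ 0 tau).
  - now apply (iter_cvg f _ 0 tau).
Qed.
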